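(* Let $H_n=\sum_{j=1}^n\frac1j$, let $\gamma$ be the Euler–Mascheroni constant, $\Gamma$ the gamma function and $G$ the Barnes $G$-function. For $x > 0$, $$\sum_{n = 1}^\infty (-1)^n n\left(H_n - \log(n + x - 1) - \gamma + \frac{x}{n} - \frac{3}{2n}\right) = \frac{\gamma }{4} - \frac{x -\log (2) - 1}{2} - 2 \log \left[\frac{G\left(\frac{x+1}{2}\right)}{G\left(\frac{x}{2}\right)}\right] + \log\Gamma \left(\frac{x}{2}\right).$$
   Context: The Barnes $G$-function is the entire function $G(z+1) = (2\pi)^{z/2} e^{-\frac{z+z^2(1+\gamma)}{2}} \prod_{m=1}^\infty \left(1+\frac{z}{m}\right)^m e^{-z+\frac{z^2}{2m}}$; it satisfies $G(1)=1$ and $G(z+1)=\Gamma(z)G(z)$. *)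

From Stdlib Require Import Reals.
From Coquelicot Require Import Coquelicot.
Open Scope R_scope.

Fixpoint harmonic (n : nat) : R :=
  match n with
  | O => 0
  | S m => harmonic m + / INR (S m)
  end.

Definition euler_gamma : R := real (Lim_seq (fun n => harmonic n - ln (INR n))).

Fixpoint rising_prod (x : R) (n : nat) : R :=
  match n with
  | O => x
  | S m => rising_prod x m * (x + INR (S m))
  end.

(* Gamma function for x > 0, via Gauss' limit formula
   Gamma(x) = lim_{n->oo} n! n^x / (x (x+1) ... (x+n)). *)
Definition Gamma (x : R) : R :=
  real (Lim_seq (fun n => INR (Factorial.fact n) * Rpower (INR n) x / rising_prod x n)).

(* Partial Weierstrass product of the Barnes G-function:
   prod_{m=1}^{N} (1 + w/m)^m exp(-w + w^2/(2m)). *)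
Fixpoint barnes_partial (w : R) (N : nat) : R :=
  match N with
  | O => 1
  | S M => barnes_partial w M *
           ((1 + w / INR (S M)) ^ (S M) * exp (- w + w ^ 2 / (2 * INR (S M))))
  end.

(* Barnes G-function (on reals):  G(w+1) = (2 pi)^{w/2} e^{-(w + w^2(1+gamma))/2}
   prod_{m>=1} (1+w/m)^m e^{-w + w^2/(2m)}. *)
Definition BarnesG (z : R) : R :=
  let w := z - 1 in
  Rpower (2 * PI) (w / 2) * exp (- (w + w ^ 2 * (1 + euler_gamma)) / 2)
  * real (Lim_seq (barnes_partial w)).

From Stdlib Require Import Reals Lra Lia.
From Coquelicot Require Import Coquelicot.
Open Scope R_scope.

(** Pair the terms of the series: terms [2m+1] and [2m+2] combine into the logarithms of the
    [(m+1)]-st factors of the Weierstrass products of [G((x+1)/2)] and [G(x/2)] and of the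
    Pochhammer product [(x/2)_M], up to harmonic numbers and [ln M!].  So the even partial sum
    [S_(2M)] is an explicit combination of [H_n - ln n - gamma] (which is [~ 1/(2n)]), of the
    Stirling defect [ln n! - (n + 1/2) ln n + n] (whose limit [ln(2 pi)/2] is identified through
    Wallis' product), of the partial Gauss product of [Gamma(x/2)] and of the partial Barnes
    products; all of these converge, and the limits add up to the right-hand side.  The odd
    partial sums differ from the even ones by a term that tends to [0]. *)

Lemma telescoping_bound_iter (u v : nat -> R) (n0 : nat) :
  (forall n, (n0 <= n)%nat -> Rabs (u (S n) - u n) <= v n - v (S n)) ->
  forall n k, (n0 <= n)%nat -> Rabs (u (n + k)%nat - u n) <= v n - v (n + k)%nat.
Proof.
  intros H n k Hn. induction k as [|k IHk].
  - rewrite Nat.add_0_r, !Rminus_diag, Rabs_R0. lra.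
  - rewrite Nat.add_succ_r.
    replace (u (S (n + k)) - u n) with ((u (n + k)%nat - u n) + (u (S (n + k)) - u (n + k)%nat))
      by ring.
    eapply Rle_trans; [apply Rabs_triang|].
    specialize (H (n + k)%nat ltac:(lia)). lra.
Qed.

Lemma is_lim_seq_telescoping_bound (u v : nat -> R) (n0 : nat) :
  (forall n, (n0 <= n)%nat -> Rabs (u (S n) - u n) <= v n - v (S n)) ->
  is_lim_seq v 0 ->
  exists l : R, is_lim_seq u l /\ forall n, (n0 <= n)%nat -> Rabs (u n - l) <= v n.
Proof.
  intros H Hv.
  assert (Hk := telescoping_bound_iter u v n0 H).
  assert (Hc : ex_finite_lim_seq u).
  { apply ex_lim_seq_cauchy_corr. intros eps.
    destruct (proj2 (is_lim_seq_spec v 0) Hv (pos_div_2 eps)) as [N HN].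
    exists (N + n0)%nat. intros n m Hn Hm.
    assert (A1 := HN n ltac:(lia)). assert (A2 := HN m ltac:(lia)).
    simpl in A1, A2. rewrite Rminus_0_r in A1, A2.
    apply Rabs_lt_between in A1. apply Rabs_lt_between in A2.
    destruct eps as [e He]; simpl in *.
    destruct (Nat.le_ge_cases n m) as [Hnm|Hnm].
    - rewrite <- Rabs_Ropp, Ropp_minus_distr.
      replace m with (n + (m - n))%nat in * by lia.
      eapply Rle_lt_trans; [apply Hk; lia|]. lra.
    - replace n with (m + (n - m))%nat in * by lia.
      eapply Rle_lt_trans; [apply Hk; lia|]. lra. }
  destruct Hc as [l Hl]. exists l. split; [exact Hl|].
  intros n Hn.
  assert (L1 : is_lim_seq (fun k => Rabs (u (n + k)%nat - u n)) (Rabs (l - u n))).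
  { apply (is_lim_seq_abs _ (Finite (l - u n))).
    apply (is_lim_seq_minus' _ _ l (u n)); [|apply is_lim_seq_const].
    apply (is_lim_seq_ext (fun k => u (k + n)%nat)); [intros; f_equal; lia|].
    apply (is_lim_seq_incr_n u n). exact Hl. }
  assert (L2 : is_lim_seq (fun k => v n - v (n + k)%nat) (v n - 0)).
  { apply is_lim_seq_minus'; [apply is_lim_seq_const|].
    apply (is_lim_seq_ext (fun k => v (k + n)%nat)); [intros; f_equal; lia|].
    apply (is_lim_seq_incr_n v n). exact Hv. }
  assert (Hle := is_lim_seq_le _ _ _ _ (fun k => Hk n k Hn) L1 L2).
  simpl in Hle. rewrite <- Rabs_Ropp, Ropp_minus_distr. lra.
Qed.

Lemma is_lim_seq_inv_INR : is_lim_seq (fun n => / INR n) 0.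
Proof. exact (is_lim_seq_inv _ _ is_lim_seq_INR ltac:(discriminate)). Qed.

Lemma is_lim_seq_scal_finite (u : nat -> R) (a l : R) :
  is_lim_seq u l -> is_lim_seq (fun n => a * u n) (a * l).
Proof. exact (is_lim_seq_scal_l u a l). Qed.

Lemma is_lim_seq_div_INR (K : R) : is_lim_seq (fun n => K / INR n) 0.
Proof.
  replace 0 with (K * 0) by ring.
  exact (is_lim_seq_scal_finite _ K 0 is_lim_seq_inv_INR).
Qed.

Lemma is_lim_seq_div_INR_sq (K : R) : is_lim_seq (fun n => K / INR n ^ 2) 0.
Proof.
  replace 0 with (K * 0 * 0) by ring.
  apply (is_lim_seq_ext (fun n => K * / INR n * / INR n)).
  { intros n. unfold Rdiv. simpl. rewrite Rmult_1_r, Rinv_mult. ring. }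
  apply is_lim_seq_mult'; [apply is_lim_seq_scal_finite|]; exact is_lim_seq_inv_INR.
Qed.

Lemma is_lim_seq_ln (u : nat -> R) (l : R) :
  0 < l -> is_lim_seq u l -> is_lim_seq (fun n => ln (u n)) (ln l).
Proof.
  intros Hl. apply is_lim_seq_continuous.
  apply continuity_pt_filterlim, continuous_ln, Hl.
Qed.

Lemma is_lim_seq_exp (u : nat -> R) (l : R) :
  is_lim_seq u l -> is_lim_seq (fun n => exp (u n)) (exp l).
Proof. apply is_lim_seq_continuous, derivable_continuous_pt, derivable_pt_exp. Qed.

Lemma is_lim_seq_double (u : nat -> R) (l : R) :
  is_lim_seq u l -> is_lim_seq (fun n => u (2 * n)%nat) l.
Proof. apply is_lim_seq_subseq, eventually_subseq. intros; lia. Qed.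

Lemma is_lim_seq_even_step (u : nat -> R) (l : R) :
  is_lim_seq (fun M => u (2 * M)%nat) l -> is_lim_seq (fun n => u (S n) - u n) 0 ->
  is_lim_seq u l.
Proof.
  intros He Hd. apply is_lim_seq_spec. apply is_lim_seq_spec in He, Hd.
  intros [e Hpos]. destruct (He (pos_div_2 (mkposreal e Hpos))) as [N1 H1].
  destruct (Hd (pos_div_2 (mkposreal e Hpos))) as [N2 H2].
  exists (2 * N1 + N2 + 1)%nat. intros n Hn. simpl.
  destruct (Nat.Even_or_Odd n) as [[M ->]|[M ->]].
  - assert (A : Rabs (u (2 * M)%nat - l) < e / 2) by (apply H1; lia). lra.
  - assert (A : Rabs (u (2 * M)%nat - l) < e / 2) by (apply H1; lia).
    assert (B : Rabs (u (S (2 * M)) - u (2 * M)%nat - 0) < e / 2) by (apply H2; lia).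
    rewrite Rminus_0_r in B. rewrite Nat.add_1_r.
    replace (u (S (2 * M)) - l) with ((u (S (2 * M)) - u (2 * M)%nat) + (u (2 * M)%nat - l))
      by ring.
    eapply Rle_lt_trans; [apply Rabs_triang|]. lra.
Qed.

Lemma exists_nat_ge (A : R) : exists n0 : nat, (1 <= n0)%nat /\ A <= INR n0.
Proof.
  destruct (INR_unbounded A) as [n Hn]. exists (S n). split; [lia|]. rewrite S_INR. lra.
Qed.

Lemma ex_finite_lim_seq_inv_sq_steps (u : nat -> R) (K : R) (n0 : nat) : (1 <= n0)%nat ->
  (forall n, (n0 <= n)%nat -> Rabs (u (S n) - u n) <= K / INR n ^ 2) ->
  ex_finite_lim_seq u.
Proof.
  intros Hn0 H.
  destruct (is_lim_seq_telescoping_bound u (fun n => 2 * K / INR n) n0) as [l [Hl _]].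
  2: apply is_lim_seq_div_INR.
  2: exists l; exact Hl.
  intros n Hn. eapply Rle_trans; [apply H; exact Hn|].
  assert (HN : 1 <= INR n) by (apply le_INR in Hn, Hn0; simpl in Hn0; lra).
  assert (HK : 0 <= K).
  { assert (A := Rle_trans _ _ _ (Rabs_pos _) (H n Hn)).
    apply Rmult_le_reg_r with (/ INR n ^ 2); [apply Rinv_0_lt_compat, pow_lt; lra|].
    rewrite Rmult_0_l. exact A. }
  assert (0 <= K * (INR n - 1) / (INR n ^ 2 * (INR n + 1))).
  { apply Rmult_le_pos; [nra|]. left. apply Rinv_0_lt_compat.
    apply Rmult_lt_0_compat; [apply pow_lt|]; lra. }
  rewrite S_INR.
  replace (2 * K / INR n - 2 * K / (INR n + 1))
    with (K / INR n ^ 2 + K * (INR n - 1) / (INR n ^ 2 * (INR n + 1))) by (field; lra).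
  lra.
Qed.

Lemma ln_1p_taylor2 t : Rabs t <= 1/2 -> Rabs (ln (1 + t) - t + t ^ 2 / 2) <= 2 * Rabs t ^ 3.
Proof.
  intros Ht. apply Rabs_le_between in Ht.
  destruct (MVT_gen (fun s => ln (1 + s) - s + s ^ 2 / 2) 0 t (fun s => s ^ 2 / (1 + s)))
    as [c [Hc Hf]].
  - intros s Hs. unfold Rmin, Rmax in Hs.
    destruct (Rle_dec 0 t); auto_derive; try lra; field; lra.
  - intros s Hs. unfold Rmin, Rmax in Hs. apply continuity_pt_filterlim.
    apply (ex_derive_continuous (fun s => ln (1 + s) - s + s ^ 2 / 2)).
    destruct (Rle_dec 0 t); auto_derive; lra.
  - unfold Rmin, Rmax in Hc. rewrite Rplus_0_r, ln_1 in Hf.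
    replace (ln (1 + t) - t + t ^ 2 / 2) with (c ^ 2 / (1 + c) * t) by lra.
    assert (Hca : Rabs c <= Rabs t).
    { unfold Rabs; destruct (Rcase_abs c), (Rcase_abs t); destruct (Rle_dec 0 t); lra. }
    assert (H1c : 1/2 <= 1 + c) by (destruct (Rle_dec 0 t); lra).
    assert (Hinv : 0 <= / (1 + c) <= 2).
    { split; [left; apply Rinv_0_lt_compat; lra|].
      replace 2 with (/ (1/2)) by field. apply Rinv_le_contravar; lra. }
    unfold Rdiv. rewrite !Rabs_mult, (Rabs_pos_eq (/ (1 + c))), <- RPow_abs by lra.
    assert (0 <= Rabs c) by apply Rabs_pos.
    assert (Rabs c ^ 2 <= Rabs t ^ 2) by (apply pow_incr; lra).
    replace (2 * Rabs t ^ 3) with (Rabs t ^ 2 * 2 * Rabs t) by ring.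
    apply Rmult_le_compat_r; [apply Rabs_pos|].
    apply Rmult_le_compat; try lra. apply pow_le; lra.
Qed.

Lemma ln_1p_taylor1 t : Rabs t <= 1/2 -> Rabs (ln (1 + t) - t) <= 2 * t ^ 2.
Proof.
  intros Ht. assert (H := ln_1p_taylor2 t Ht).
  replace (ln (1 + t) - t) with ((ln (1 + t) - t + t ^ 2 / 2) + - (t ^ 2 / 2)) by ring.
  eapply Rle_trans; [apply Rabs_triang|]. rewrite Rabs_Ropp.
  rewrite (Rabs_pos_eq (t ^ 2 / 2)) by (apply Rmult_le_pos; [apply pow2_ge_0|lra]).
  assert (0 <= Rabs t) by apply Rabs_pos.
  assert (Rabs t ^ 3 <= t ^ 2 / 2) by (rewrite <- (pow2_abs t); simpl; nra).
  assert (0 <= t ^ 2) by apply pow2_ge_0.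
  lra.
Qed.

Lemma ln_plus_factor a b : 0 < a -> 0 < a + b -> ln (a + b) = ln a + ln (1 + b / a).
Proof.
  intros Ha Hb. rewrite <- ln_mult; auto.
  - f_equal. field. lra.
  - apply Rmult_lt_reg_l with a; auto. rewrite Rmult_0_r. field_simplify; lra.
Qed.

Lemma INR_double n : INR (2 * n) = 2 * INR n.
Proof. rewrite mult_INR. reflexivity. Qed.

Lemma inv_INR_le_half n : (2 <= n)%nat -> 0 < / INR n <= 1/2.
Proof.
  intros Hn. apply le_INR in Hn. simpl in Hn. split.
  - apply Rinv_0_lt_compat; lra.
  - replace (1/2) with (/ 2) by field. apply Rinv_le_contravar; lra.
Qed.

Lemma is_lim_seq_mul_ln_1p (c : R) : is_lim_seq (fun k => INR (S k) * ln (1 + c / INR (S k))) c.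
Proof.
  apply (is_lim_seq_ext (fun k => INR (S k) * ln (1 + c / INR (S k)) - c + c)); [intros; ring|].
  replace (Finite c) with (Finite (0 + c)) by (f_equal; ring).
  apply is_lim_seq_plus'; [|apply is_lim_seq_const].
  apply is_lim_seq_abs_0.
  destruct (exists_nat_ge (2 * Rabs c)) as [n0 [Hn0 Hc]].
  apply (is_lim_seq_le_le_loc (fun _ => 0) _ (fun k => 2 * c ^ 2 / INR (S k))).
  - exists n0. intros k Hk. split; [apply Rabs_pos|].
    assert (HN : INR n0 <= INR (S k)) by (apply le_INR; lia).
    apply le_INR in Hn0. simpl in Hn0.
    set (N := INR (S k)) in *.
    assert (Ht : Rabs (c / N) <= 1/2).
    { unfold Rdiv. rewrite Rabs_mult, (Rabs_pos_eq (/ N)) by (left; apply Rinv_0_lt_compat; lra).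
      apply Rmult_le_reg_r with N; [lra|]. rewrite Rmult_assoc, Rinv_l by lra. lra. }
    replace (N * ln (1 + c / N) - c) with (N * (ln (1 + c / N) - c / N)) by (field; lra).
    replace (2 * c ^ 2 / N) with (N * (2 * (c / N) ^ 2)) by (field; lra).
    rewrite Rabs_mult, Rabs_pos_eq by lra.
    apply Rmult_le_compat_l; [lra|]. exact (ln_1p_taylor1 _ Ht).
  - apply is_lim_seq_const.
  - apply (is_lim_seq_incr_1 (fun k => 2 * c ^ 2 / INR k)). apply is_lim_seq_div_INR.
Qed.

(** * Euler's constant *)

Definition harmonic_defect (n : nat) : R := harmonic n - ln (INR n).

Lemma harmonic_defect_step n : (2 <= n)%nat ->
  Rabs ((harmonic_defect (S n) - / (2 * INR (S n))) - (harmonic_defect n - / (2 * INR n)))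
    <= 3 / INR n ^ 2 - 3 / INR (S n) ^ 2.
Proof.
  intros Hn. assert (Ht := inv_INR_le_half n Hn).
  assert (HN : 2 <= INR n) by (apply le_INR in Hn; simpl in Hn; lra).
  unfold harmonic_defect. change (harmonic (S n)) with (harmonic n + / INR (S n)).
  rewrite S_INR. set (N := INR n) in *. set (t := / N) in *.
  rewrite (ln_plus_factor N 1) by lra.
  replace (1 / N) with t by (unfold t; field; lra).
  replace (harmonic n + / (N + 1) - (ln N + ln (1 + t)) - / (2 * (N + 1)) -
    (harmonic n - ln N - / (2 * N))) with (- (ln (1 + t) - t + t ^ 2 / 2) + t ^ 3 / (2 * (1 + t)))
    by (unfold t; field; lra).
  eapply Rle_trans; [apply Rabs_triang|]. rewrite Rabs_Ropp.
  assert (H2 := ln_1p_taylor2 t ltac:(rewrite Rabs_pos_eq; lra)).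
  rewrite (Rabs_pos_eq t) in H2 by lra.
  assert (Hr : 0 <= t ^ 3 / (2 * (1 + t)) <= t ^ 3 / 2).
  { split.
    - apply Rmult_le_pos; [apply pow_le; lra|]. left; apply Rinv_0_lt_compat; lra.
    - unfold Rdiv. apply Rmult_le_compat_l; [apply pow_le; lra|]. apply Rinv_le_contravar; lra. }
  rewrite (Rabs_pos_eq (t ^ 3 / (2 * (1 + t)))) by lra.
  assert (0 <= (7 * N ^ 2 - 4 * N - 5) / (2 * N ^ 3 * (N + 1) ^ 2)).
  { apply Rmult_le_pos; [nra|]. left. apply Rinv_0_lt_compat.
    repeat apply Rmult_lt_0_compat; try apply pow_lt; lra. }
  replace (3 / N ^ 2 - 3 / (N + 1) ^ 2)
    with (5/2 * t ^ 3 + (7 * N ^ 2 - 4 * N - 5) / (2 * N ^ 3 * (N + 1) ^ 2)) by (unfold t; field; lra).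
  lra.
Qed.

Lemma harmonic_defect_asymptotics :
  is_lim_seq harmonic_defect euler_gamma /\
  forall n, (2 <= n)%nat -> Rabs (harmonic_defect n - / (2 * INR n) - euler_gamma) <= 3 / INR n ^ 2.
Proof.
  destruct (is_lim_seq_telescoping_bound (fun n => harmonic_defect n - / (2 * INR n))
    (fun n => 3 / INR n ^ 2) 2 harmonic_defect_step (is_lim_seq_div_INR_sq 3)) as [l [Hl Hb]].
  assert (Hu : is_lim_seq harmonic_defect l).
  { apply (is_lim_seq_ext (fun n => harmonic_defect n - / (2 * INR n) + / 2 * / INR n)).
    { intros n. rewrite Rinv_mult. ring. }
    replace (Finite l) with (Finite (l + / 2 * 0)) by (f_equal; ring).
    apply is_lim_seq_plus'; [exact Hl|]. apply is_lim_seq_scal_finite, is_lim_seq_inv_INR. }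
  replace euler_gamma with l by (unfold euler_gamma; fold harmonic_defect;
    rewrite (is_lim_seq_unique _ _ Hu); reflexivity).
  split; assumption.
Qed.

Lemma is_lim_seq_harmonic_defect : is_lim_seq harmonic_defect euler_gamma.
Proof. exact (proj1 harmonic_defect_asymptotics). Qed.

Lemma is_lim_seq_scaled_harmonic_defect :
  is_lim_seq (fun n => INR n * (harmonic_defect n - euler_gamma)) (1/2).
Proof.
  destruct harmonic_defect_asymptotics as [_ Hb].
  apply (is_lim_seq_ext_loc
    (fun n => INR n * (harmonic_defect n - / (2 * INR n) - euler_gamma) + 1/2)).
  { exists 1%nat. intros n Hn. apply le_INR in Hn. simpl in Hn. field. lra. }
  replace (Finite (1/2)) with (Finite (0 + 1/2)) by (f_equal; ring).
  apply is_lim_seq_plus'; [|apply is_lim_seq_const].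
  apply is_lim_seq_abs_0.
  apply (is_lim_seq_le_le_loc (fun _ => 0) _ (fun n => 3 / INR n));
    [|apply is_lim_seq_const|apply is_lim_seq_div_INR].
  exists 2%nat. intros n Hn. split; [apply Rabs_pos|].
  assert (HN : 2 <= INR n) by (apply le_INR in Hn; simpl in Hn; lra).
  rewrite Rabs_mult, Rabs_pos_eq by lra.
  replace (3 / INR n) with (INR n * (3 / INR n ^ 2)) by (field; lra).
  apply Rmult_le_compat_l; [lra|]. exact (Hb n Hn).
Qed.

(** * Wallis' product and Stirling's constant *)

Definition wallis_integral (n : nat) : R := RInt (fun t => sin t ^ n) 0 (PI / 2).

Lemma continuous_sin_pow n z : continuous (fun t => sin t ^ n) z.
Proof. apply (ex_derive_continuous (fun t => sin t ^ n)). auto_derive. auto. Qed.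

Lemma ex_RInt_sin_pow n : ex_RInt (fun t => sin t ^ n) 0 (PI / 2).
Proof. apply (@ex_RInt_continuous R_CompleteNormedModule). intros. apply continuous_sin_pow. Qed.

Lemma wallis_integral_0 : wallis_integral 0 = PI / 2.
Proof. unfold wallis_integral. simpl. rewrite RInt_const. unfold scal. simpl. unfold mult. simpl. ring. Qed.

Lemma wallis_integral_1 : wallis_integral 1 = 1.
Proof.
  unfold wallis_integral. apply (@is_RInt_unique R_CompleteNormedModule).
  replace 1 with (minus (- cos (PI / 2)) (- cos 0))
    by (rewrite cos_PI2, cos_0; unfold minus, plus, opp; simpl; ring).
  apply (@is_RInt_derive R_CompleteNormedModule (fun t => - cos t)).
  - intros x _. auto_derive; [auto|ring].
  - intros x _. apply (continuous_sin_pow 1).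
Qed.

Lemma wallis_integral_rec n : (INR n + 2) * wallis_integral (S (S n)) = (INR n + 1) * wallis_integral n.
Proof.
  set (f := fun t => (INR n + 2) * sin t ^ (S (S n)) - (INR n + 1) * sin t ^ n).
  assert (H : is_RInt f 0 (PI / 2) (minus (- cos (PI / 2) * sin (PI / 2) ^ (S n)) (- cos 0 * sin 0 ^ (S n)))).
  { apply (@is_RInt_derive R_CompleteNormedModule (fun t => - cos t * sin t ^ (S n))).
    - intros x _. unfold f. auto_derive; [auto|].
      change (match n with 0%nat => 1 | S _ => INR n + 1 end) with (INR (S n)).
      rewrite S_INR.
      assert (Hc : cos x ^ 2 = 1 - sin x ^ 2) by (generalize (sin2_cos2 x); unfold Rsqr; simpl; lra).
      simpl pow. ring_simplify. rewrite Hc. ring.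
    - intros x _. apply (ex_derive_continuous f). unfold f. auto_derive. auto. }
  rewrite cos_PI2, sin_0, cos_0 in H. unfold minus, plus, opp in H. simpl in H.
  match type of H with is_RInt _ _ _ ?v => replace v with 0 in H by ring end.
  assert (H2 : is_RInt f 0 (PI / 2)
    ((INR n + 2) * wallis_integral (S (S n)) - (INR n + 1) * wallis_integral n)).
  { apply (@is_RInt_minus R_CompleteNormedModule); apply (@is_RInt_scal R_CompleteNormedModule);
      apply (RInt_correct (V := R_CompleteNormedModule)); apply ex_RInt_sin_pow. }
  apply (@is_RInt_unique R_CompleteNormedModule) in H, H2. lra.
Qed.

Lemma wallis_integral_decr n : wallis_integral (S n) <= wallis_integral n.
Proof.
  unfold wallis_integral. apply RInt_le; try apply ex_RInt_sin_pow.
  - generalize PI_RGT_0; lra.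
  - intros x Hx. assert (0 <= sin x) by (apply sin_ge_0; generalize PI_RGT_0; lra).
    assert (sin x <= 1) by exact (proj2 (SIN_bound x)).
    assert (0 <= sin x ^ n) by (apply pow_le; auto).
    simpl. nra.
Qed.

(* [wallis_ratio n = (2n)! / (4^n n!^2)]. *)
Fixpoint wallis_ratio (n : nat) : R :=
  match n with
  | O => 1
  | S m => wallis_ratio m * ((2 * INR m + 1) / (2 * INR m + 2))
  end.

Lemma wallis_ratio_pos n : 0 < wallis_ratio n.
Proof.
  induction n; simpl; [lra|]. assert (0 <= INR n) by apply pos_INR.
  apply Rmult_lt_0_compat; auto. apply Rdiv_lt_0_compat; lra.
Qed.

Lemma wallis_integral_closed n :
  wallis_integral (2 * n) = PI / 2 * wallis_ratio n /\
  wallis_integral (S (2 * n)) = / ((2 * INR n + 1) * wallis_ratio n).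
Proof.
  induction n as [|n [H1 H2]].
  - simpl. rewrite wallis_integral_0, wallis_integral_1. split; [ring|field].
  - assert (Hp := wallis_ratio_pos n). assert (0 <= INR n) by apply pos_INR.
    assert (E1 := wallis_integral_rec (2 * n)). assert (E2 := wallis_integral_rec (S (2 * n))).
    replace (S (S (2 * n))) with (2 * S n)%nat in E1, E2 by lia.
    rewrite INR_double in E1. rewrite S_INR, INR_double in E2.
    rewrite H1 in E1. rewrite H2 in E2.
    simpl wallis_ratio. rewrite S_INR. split.
    + apply Rmult_eq_reg_l with (2 * INR n + 2); [|lra]. rewrite E1. field. lra.
    + apply Rmult_eq_reg_l with (2 * INR n + 1 + 2); [|lra]. rewrite E2. field. repeat split; lra.
Qed.

Lemma wallis_product_bounds k :
  1 <= PI / 2 * (2 * INR (S k) + 1) * wallis_ratio (S k) ^ 2 <= 1 + / 2 * / INR (S k).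
Proof.
  destruct (wallis_integral_closed (S k)) as [H1 H2].
  assert (Hp := wallis_ratio_pos (S k)).
  assert (A1 := wallis_integral_decr (2 * S k)).
  assert (A2 := wallis_integral_decr (S (2 * k))).
  assert (E := wallis_integral_rec (S (2 * k))).
  replace (S (S (2 * k))) with (2 * S k)%nat in A2, E by lia.
  rewrite S_INR, INR_double in E. rewrite !S_INR in *.
  set (N := INR k + 1) in *. set (p := wallis_ratio (S k)) in *.
  assert (HN : 1 <= N) by (unfold N; generalize (pos_INR k); lra).
  set (q := (2 * N + 1) * p).
  assert (Hq : 0 < q) by (unfold q; nra).
  replace (PI / 2 * (2 * N + 1) * p ^ 2) with (wallis_integral (2 * S k) * q)
    by (rewrite H1; unfold q; ring).
  assert (Hodd : wallis_integral (S (2 * S k)) * q = 1) by (rewrite H2; unfold q; field; lra).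
  assert (Hprev : wallis_integral (S (2 * k)) * q = 1 + / 2 * / N).
  { apply Rmult_eq_reg_l with (2 * INR k + 1 + 1); [|unfold N in *; lra].
    rewrite <- Rmult_assoc, <- E, Rmult_assoc, Hodd. unfold N. field. generalize (pos_INR k); lra. }
  split; [rewrite <- Hodd|rewrite <- Hprev]; apply Rmult_le_compat_r; lra.
Qed.

Lemma is_lim_seq_wallis_product :
  is_lim_seq (fun n => PI / 2 * (2 * INR n + 1) * wallis_ratio n ^ 2) 1.
Proof.
  apply (is_lim_seq_le_le_loc (fun _ => 1) _ (fun n => 1 + / 2 * / INR n)).
  - exists 1%nat. intros [|k] Hk; [lia|]. apply wallis_product_bounds.
  - apply is_lim_seq_const.
  - replace (Finite 1) with (Finite (1 + / 2 * 0)) by (f_equal; ring).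
    apply is_lim_seq_plus'; [apply is_lim_seq_const|].
    apply is_lim_seq_scal_finite, is_lim_seq_inv_INR.
Qed.

Fixpoint ln_fact (n : nat) : R :=
  match n with
  | O => 0
  | S m => ln_fact m + ln (INR (S m))
  end.

Lemma ln_fact_INR n : ln (INR (Factorial.fact n)) = ln_fact n.
Proof.
  induction n as [|n IHn]; [apply ln_1|].
  change (Factorial.fact (S n)) with (S n * Factorial.fact n)%nat.
  rewrite mult_INR, ln_mult, IHn.
  - change (ln_fact (S n)) with (ln_fact n + ln (INR (S n))). ring.
  - apply lt_0_INR. lia.
  - apply lt_0_INR, Factorial.lt_O_fact.
Qed.

Definition stirling_defect (n : nat) : R := ln_fact n - (INR n + 1/2) * ln (INR n) + INR n.

Lemma stirling_defect_step n : (2 <= n)%nat ->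
  Rabs (stirling_defect (S n) - stirling_defect n) <= 6 / INR n - 6 / INR (S n).
Proof.
  intros Hn. assert (Ht := inv_INR_le_half n Hn).
  assert (HN : 2 <= INR n) by (apply le_INR in Hn; simpl in Hn; lra).
  unfold stirling_defect. change (ln_fact (S n)) with (ln_fact n + ln (INR (S n))). rewrite S_INR.
  set (N := INR n) in *. set (t := / N) in *.
  rewrite (ln_plus_factor N 1) by lra.
  replace (1 / N) with t by (unfold t; field; lra).
  set (r := ln (1 + t) - t + t ^ 2 / 2).
  assert (Hr := ln_1p_taylor2 t ltac:(rewrite Rabs_pos_eq; lra)). fold r in Hr.
  rewrite (Rabs_pos_eq t) in Hr by lra.
  replace (ln_fact n + (ln N + ln (1 + t)) - (N + 1 + 1 / 2) * (ln N + ln (1 + t)) + (N + 1) -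
    (ln_fact n - (N + 1 / 2) * ln N + N)) with (t ^ 2 / 4 - (N + 1/2) * r)
    by (unfold r, t; field; lra).
  eapply Rle_trans; [apply Rabs_triang|]. rewrite Rabs_Ropp.
  rewrite (Rabs_pos_eq (t ^ 2 / 4)) by (generalize (pow2_ge_0 t); lra).
  rewrite Rabs_mult, (Rabs_pos_eq (N + 1/2)) by lra.
  assert ((N + 1/2) * Rabs r <= (N + 1/2) * (2 * t ^ 3)) by (apply Rmult_le_compat_l; lra).
  assert ((N + 1/2) * (2 * t ^ 3) = 2 * t ^ 2 + t ^ 3) by (unfold t; field; lra).
  assert (t ^ 3 <= t ^ 2 / 2) by (simpl; nra).
  assert (0 <= 3 * (N - 1) / (N ^ 2 * (N + 1))).
  { apply Rmult_le_pos; [lra|]. left. apply Rinv_0_lt_compat. apply Rmult_lt_0_compat; nra. }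
  replace (6 / N - 6 / (N + 1)) with (3 * t ^ 2 + 3 * (N - 1) / (N ^ 2 * (N + 1)))
    by (unfold t; field; lra).
  assert (0 <= t ^ 2) by apply pow2_ge_0.
  lra.
Qed.

Lemma ln_wallis_ratio n : ln (wallis_ratio n) = ln_fact (2 * n) - 2 * ln_fact n - 2 * INR n * ln 2.
Proof.
  induction n as [|n IHn]; [simpl; rewrite ln_1; ring|].
  assert (0 <= INR n) by apply pos_INR.
  simpl wallis_ratio. unfold Rdiv.
  rewrite ln_mult, IHn, ln_mult, ln_Rinv; try apply wallis_ratio_pos;
    try apply Rmult_lt_0_compat; try apply Rinv_0_lt_compat; try lra.
  replace (2 * S n)%nat with (S (S (2 * n))) by lia.
  change (ln_fact (S (S (2 * n))))
    with (ln_fact (2 * n) + ln (INR (S (2 * n))) + ln (INR (S (S (2 * n))))).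
  change (ln_fact (S n)) with (ln_fact n + ln (INR (S n))).
  rewrite !S_INR, INR_double.
  replace (2 * INR n + 1 + 1) with (2 * (INR n + 1)) by ring.
  replace (2 * INR n + 2) with (2 * (INR n + 1)) by ring.
  rewrite ln_mult by lra. ring.
Qed.

Lemma ln_wallis_product n : (1 <= n)%nat ->
  ln (PI / 2 * (2 * INR n + 1) * wallis_ratio n ^ 2)
  = ln (PI / 2) + ln (2 + / INR n) + 2 * stirling_defect (2 * n) - 4 * stirling_defect n + ln 2.
Proof.
  intros Hn. apply le_INR in Hn. simpl in Hn.
  assert (Hp := wallis_ratio_pos n). assert (HPI := PI_RGT_0).
  assert (0 < / INR n) by (apply Rinv_0_lt_compat; lra).
  replace (2 * INR n + 1) with (INR n * (2 + / INR n)) by (field; lra).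
  assert (0 < INR n * (2 + / INR n)) by (apply Rmult_lt_0_compat; lra).
  assert (0 < PI / 2 * (INR n * (2 + / INR n))) by (apply Rmult_lt_0_compat; lra).
  rewrite !ln_mult, ln_pow, ln_wallis_ratio by (try apply pow_lt; lra).
  unfold stirling_defect. rewrite INR_double, (ln_mult 2 (INR n)) by lra.
  change (INR 2) with 2. field.
Qed.

Lemma is_lim_seq_stirling_defect : is_lim_seq stirling_defect (ln (2 * PI) / 2).
Proof.
  destruct (is_lim_seq_telescoping_bound stirling_defect (fun n => 6 / INR n) 2
    stirling_defect_step (is_lim_seq_div_INR 6)) as [C [HC _]].
  assert (Hw := is_lim_seq_ln _ 1 Rlt_0_1 is_lim_seq_wallis_product). rewrite ln_1 in Hw.
  assert (Hw' : is_lim_seq (fun n => ln (PI / 2 * (2 * INR n + 1) * wallis_ratio n ^ 2))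
    (ln (PI / 2) + ln 2 + 2 * C - 4 * C + ln 2)).
  { apply (is_lim_seq_ext_loc (fun n => ln (PI / 2) + ln (2 + / INR n)
      + 2 * stirling_defect (2 * n) - 4 * stirling_defect n + ln 2)).
    { exists 1%nat. intros n Hn. symmetry. apply ln_wallis_product, Hn. }
    assert (Hr : is_lim_seq (fun n => ln (2 + / INR n)) (ln (2 + 0))).
    { apply is_lim_seq_ln; [lra|].
      apply is_lim_seq_plus'; [apply is_lim_seq_const|exact is_lim_seq_inv_INR]. }
    rewrite Rplus_0_r in Hr.
    apply is_lim_seq_plus'; [|apply is_lim_seq_const].
    apply is_lim_seq_minus'; [|apply is_lim_seq_scal_finite, HC].
    apply is_lim_seq_plus'; [|apply is_lim_seq_scal_finite, is_lim_seq_double, HC].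
    apply is_lim_seq_plus'; [apply is_lim_seq_const|exact Hr]. }
  assert (Heq := is_lim_seq_unique _ _ Hw'). rewrite (is_lim_seq_unique _ _ Hw) in Heq.
  injection Heq as Heq.
  replace (ln (2 * PI) / 2) with C; [exact HC|].
  assert (HPI := PI_RGT_0). unfold Rdiv in Heq.
  rewrite ln_mult, ln_Rinv in Heq by lra. rewrite ln_mult by lra. lra.
Qed.

(** * The Gauss product of Gamma and the Barnes product *)

Fixpoint ln_rising (y : R) (M : nat) : R :=
  match M with
  | O => 0
  | S m => ln_rising y m + ln (y + INR m)
  end.

Lemma ln_rising_prod y n : 0 < y -> 0 < rising_prod y n /\ ln (rising_prod y n) = ln_rising y (S n).
Proof.
  intros Hy. induction n as [|n [H1 H2]].
  - simpl. rewrite Rplus_0_l, Rplus_0_r. split; [exact Hy|reflexivity].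
  - assert (0 <= INR (S n)) by apply pos_INR.
    change (rising_prod y (S n)) with (rising_prod y n * (y + INR (S n))).
    change (ln_rising y (S (S n))) with (ln_rising y (S n) + ln (y + INR (S n))).
    split; [apply Rmult_lt_0_compat; lra|]. rewrite ln_mult, H2 by lra. reflexivity.
Qed.

Definition ln_gamma_seq (y : R) (n : nat) : R := ln_fact n + y * ln (INR n) - ln_rising y (S n).

Lemma ln_gamma_seq_step y n : 0 < y -> (2 <= n)%nat -> 2 * y <= INR n ->
  Rabs (ln_gamma_seq y (S n) - ln_gamma_seq y n) <= (3 * y + 2 * y ^ 2) / INR n ^ 2.
Proof.
  intros Hy Hn Hyn.
  assert (HN : 2 <= INR n) by (apply le_INR in Hn; simpl in Hn; lra).
  unfold ln_gamma_seq. change (ln_fact (S n)) with (ln_fact n + ln (INR (S n))).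
  change (ln_rising y (S (S n))) with (ln_rising y (S n) + ln (y + INR (S n))). rewrite S_INR.
  set (N := INR n) in *.
  rewrite (Rplus_comm y (N + 1)), (ln_plus_factor (N + 1) y), (ln_plus_factor N 1) by lra.
  set (t := 1 / N). set (s := y / (N + 1)).
  assert (Ht : 0 < t <= 1/2).
  { unfold t. split; [apply Rdiv_lt_0_compat; lra|].
    apply Rmult_le_reg_l with N; [lra|]. field_simplify; lra. }
  assert (Hs : 0 < s <= 1/2).
  { unfold s. split; [apply Rdiv_lt_0_compat; lra|].
    apply Rmult_le_reg_l with (N + 1); [lra|]. field_simplify; lra. }
  assert (A1 := ln_1p_taylor1 t ltac:(rewrite Rabs_pos_eq; lra)).
  assert (A2 := ln_1p_taylor1 s ltac:(rewrite Rabs_pos_eq; lra)).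
  replace (ln_fact n + (ln N + ln (1 + t)) + y * (ln N + ln (1 + t)) -
    (ln_rising y (S n) + (ln N + ln (1 + t) + ln (1 + s))) - (ln_fact n + y * ln N - ln_rising y (S n)))
    with (y * (ln (1 + t) - t) - (ln (1 + s) - s) + y / (N * (N + 1))) by (unfold t, s; field; lra).
  eapply Rle_trans; [apply Rabs_triang|].
  eapply Rle_trans; [apply Rplus_le_compat_r, Rabs_triang|].
  rewrite Rabs_Ropp, Rabs_mult, (Rabs_pos_eq y), (Rabs_pos_eq (y / (N * (N + 1))))
    by (try apply Rdiv_le_0_compat; nra).
  assert (B1 : y * Rabs (ln (1 + t) - t) <= 2 * y / N ^ 2).
  { replace (2 * y / N ^ 2) with (y * (2 * t ^ 2)) by (unfold t; field; lra).
    apply Rmult_le_compat_l; lra. }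
  assert (B2 : 2 * s ^ 2 <= 2 * y ^ 2 / N ^ 2).
  { replace (2 * s ^ 2) with (2 * y ^ 2 / (N + 1) ^ 2) by (unfold s; field; lra).
    unfold Rdiv. apply Rmult_le_compat_l; [generalize (pow2_ge_0 y); lra|].
    apply Rinv_le_contravar; [apply pow_lt; lra|]. apply pow_incr; lra. }
  assert (B3 : y / (N * (N + 1)) <= y / N ^ 2).
  { unfold Rdiv. apply Rmult_le_compat_l; [lra|]. apply Rinv_le_contravar; simpl; nra. }
  replace ((3 * y + 2 * y ^ 2) / N ^ 2) with (2 * y / N ^ 2 + 2 * y ^ 2 / N ^ 2 + y / N ^ 2)
    by (field; lra).
  lra.
Qed.

Lemma ex_finite_lim_ln_gamma_seq y : 0 < y -> ex_finite_lim_seq (ln_gamma_seq y).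
Proof.
  intros Hy. destruct (exists_nat_ge (2 * y + 2)) as [n0 [H0 H1]].
  apply (ex_finite_lim_seq_inv_sq_steps _ (3 * y + 2 * y ^ 2) n0 H0).
  intros n Hn. apply le_INR in Hn. apply ln_gamma_seq_step; try lra.
  apply INR_le. simpl. lra.
Qed.

Lemma ln_Gamma_lim (y l : R) : 0 < y -> is_lim_seq (ln_gamma_seq y) l -> ln (Gamma y) = l.
Proof.
  intros Hy Hl. unfold Gamma.
  replace (Lim_seq _) with (Finite (exp l)); [apply ln_exp|].
  symmetry. apply is_lim_seq_unique.
  apply (is_lim_seq_ext_loc (fun n => exp (ln_gamma_seq y n))); [|apply is_lim_seq_exp, Hl].
  exists 1%nat. intros n Hn. destruct (ln_rising_prod y n Hy) as [P1 P2].
  assert (0 < INR n) by (apply lt_0_INR; lia).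
  assert (0 < INR (Factorial.fact n)) by (apply lt_0_INR, Factorial.lt_O_fact).
  unfold ln_gamma_seq, Rpower. rewrite <- P2, <- ln_fact_INR.
  unfold Rminus. rewrite !exp_plus, exp_Ropp, !exp_ln by assumption. reflexivity.
Qed.

Fixpoint ln_barnes_partial (w : R) (M : nat) : R :=
  match M with
  | O => 0
  | S m => ln_barnes_partial w m
           + (INR (S m) * ln (1 + w / INR (S m)) - w + w ^ 2 / (2 * INR (S m)))
  end.

Lemma one_plus_div_INR_pos w m : -1 < w -> (1 <= m)%nat -> 0 < 1 + w / INR m.
Proof.
  intros Hw Hm. apply le_INR in Hm. simpl in Hm.
  destruct (Rle_dec 0 w).
  - assert (0 <= w / INR m) by (apply Rdiv_le_0_compat; lra). lra.
  - assert (w <= w / INR m); [|lra].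
    apply Rmult_le_reg_l with (INR m); [lra|]. field_simplify; nra.
Qed.

Lemma barnes_partial_exp w M : -1 < w -> barnes_partial w M = exp (ln_barnes_partial w M).
Proof.
  intros Hw. induction M as [|M IHM]; [simpl; rewrite exp_0; reflexivity|].
  change (barnes_partial w (S M)) with (barnes_partial w M *
    ((1 + w / INR (S M)) ^ (S M) * exp (- w + w ^ 2 / (2 * INR (S M))))).
  change (ln_barnes_partial w (S M)) with (ln_barnes_partial w M
    + (INR (S M) * ln (1 + w / INR (S M)) - w + w ^ 2 / (2 * INR (S M)))).
  rewrite IHM.
  assert (Hp := one_plus_div_INR_pos w (S M) Hw ltac:(lia)).
  rewrite <- (exp_ln ((1 + w / INR (S M)) ^ S M)), ln_pow by (try apply pow_lt; auto).
  rewrite <- !exp_plus. f_equal. ring.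
Qed.

Lemma ln_barnes_partial_step w M : 1 <= INR M -> 2 * Rabs w <= INR M ->
  Rabs (ln_barnes_partial w (S M) - ln_barnes_partial w M) <= 2 * Rabs w ^ 3 / INR M ^ 2.
Proof.
  intros H1 H2.
  change (ln_barnes_partial w (S M)) with (ln_barnes_partial w M
    + (INR (S M) * ln (1 + w / INR (S M)) - w + w ^ 2 / (2 * INR (S M)))).
  rewrite S_INR. set (N := INR M) in *. set (t := w / (N + 1)).
  replace (ln_barnes_partial w M + ((N + 1) * ln (1 + t) - w + w ^ 2 / (2 * (N + 1)))
    - ln_barnes_partial w M) with ((N + 1) * (ln (1 + t) - t + t ^ 2 / 2)) by (unfold t; field; lra).
  assert (E : Rabs t = Rabs w / (N + 1)).
  { unfold t, Rdiv. rewrite Rabs_mult, (Rabs_pos_eq (/ (N + 1))); [reflexivity|].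
    left; apply Rinv_0_lt_compat; lra. }
  assert (Ht : Rabs t <= 1/2).
  { rewrite E. apply Rmult_le_reg_r with (N + 1); [lra|]. field_simplify; lra. }
  rewrite Rabs_mult, (Rabs_pos_eq (N + 1)) by lra.
  eapply Rle_trans; [apply Rmult_le_compat_l; [lra|exact (ln_1p_taylor2 t Ht)]|].
  rewrite E.
  assert (0 <= Rabs w) by apply Rabs_pos.
  replace ((N + 1) * (2 * (Rabs w / (N + 1)) ^ 3)) with (2 * Rabs w ^ 3 / (N + 1) ^ 2)
    by (field; lra).
  unfold Rdiv. apply Rmult_le_compat_l; [apply Rmult_le_pos; [lra|apply pow_le; lra]|].
  apply Rinv_le_contravar; [apply pow_lt; lra|]. apply pow_incr; lra.
Qed.

Lemma ex_finite_lim_ln_barnes_partial w : ex_finite_lim_seq (ln_barnes_partial w).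
Proof.
  destruct (exists_nat_ge (2 * Rabs w + 1)) as [n0 [H0 H1]].
  apply (ex_finite_lim_seq_inv_sq_steps _ (2 * Rabs w ^ 3) n0 H0).
  intros n Hn. apply le_INR in Hn. generalize (Rabs_pos w); intro.
  apply ln_barnes_partial_step; lra.
Qed.

Lemma ln_BarnesG_lim (z l : R) : 0 < z -> is_lim_seq (ln_barnes_partial (z - 1)) l ->
  0 < BarnesG z /\
  ln (BarnesG z) = (z - 1) / 2 * ln (2 * PI) - ((z - 1) + (z - 1) ^ 2 * (1 + euler_gamma)) / 2 + l.
Proof.
  intros Hz Hl.
  assert (Hb : Lim_seq (barnes_partial (z - 1)) = exp l).
  { apply is_lim_seq_unique.
    apply (is_lim_seq_ext (fun n => exp (ln_barnes_partial (z - 1) n))); [|apply is_lim_seq_exp, Hl].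
    intros n. symmetry. apply barnes_partial_exp. lra. }
  unfold BarnesG. rewrite Hb. simpl real. unfold Rpower. rewrite <- !exp_plus.
  split; [apply exp_pos|]. rewrite ln_exp. field.
Qed.

(** * The alternating series *)

Definition series_term (x : R) (k : nat) : R :=
  let n := INR (S k) in
  (-1) ^ (S k) * n * (harmonic (S k) - ln (n + x - 1) - euler_gamma + x / n - 3 / (2 * n)).

Fixpoint partial_sum (x : R) (m : nat) : R :=
  match m with
  | O => 0
  | S j => partial_sum x j + series_term x j
  end.

Lemma sum_n_series_term x N : sum_n (series_term x) N = partial_sum x (S N).
Proof.
  induction N as [|N IHN]; [rewrite sum_O; simpl; ring|].
  rewrite sum_Sn, IHN. reflexivity.
Qed.

Lemma partial_sum_even x M : 0 < x ->
  partial_sum x (2 * M)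
  = (INR M + 1/2) * harmonic (2 * M) - harmonic M / 4 - euler_gamma * INR M - INR M * ln 2
    - 2 * (ln_barnes_partial ((x + 1) / 2 - 1) M - ln_barnes_partial (x / 2 - 1) M) - INR M
    + (x / 2 - 3/4) * harmonic M - ln_rising (x / 2) M.
Proof.
  intros Hx. induction M as [|M IHM]; [simpl; field|].
  replace (2 * S M)%nat with (S (S (2 * M))) by lia.
  change (partial_sum x (S (S (2 * M))))
    with (partial_sum x (2 * M) + series_term x (2 * M) + series_term x (S (2 * M))).
  rewrite IHM. unfold series_term.
  rewrite pow_1_odd. replace (S (S (2 * M))) with (2 * S M)%nat by lia. rewrite pow_1_even.
  replace (2 * S M)%nat with (S (S (2 * M))) by lia.
  change (harmonic (S (S (2 * M)))) with (harmonic (S (2 * M)) + / INR (S (S (2 * M)))).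
  change (harmonic (S (2 * M))) with (harmonic (2 * M) + / INR (S (2 * M))).
  change (harmonic (S M)) with (harmonic M + / INR (S M)).
  change (ln_rising (x / 2) (S M)) with (ln_rising (x / 2) M + ln (x / 2 + INR M)).
  change (ln_barnes_partial ?w (S M)) with (ln_barnes_partial w M
    + (INR (S M) * ln (1 + w / INR (S M)) - w + w ^ 2 / (2 * INR (S M)))).
  rewrite !S_INR, INR_double.
  assert (HM : 0 <= INR M) by apply pos_INR.
  set (m := INR M) in *.
  replace (2 * m + 1 + x - 1) with (2 * (x / 2 + m)) by field.
  replace (2 * m + 1 + 1 + x - 1) with (2 * (m + x / 2 + 1/2)) by field.
  replace (1 + ((x + 1) / 2 - 1) / (m + 1)) with ((m + x / 2 + 1/2) / (m + 1)) by (field; lra).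
  replace (1 + (x / 2 - 1) / (m + 1)) with ((x / 2 + m) / (m + 1)) by (field; lra).
  rewrite !ln_mult, !ln_div by lra.
  field. lra.
Qed.

Lemma partial_sum_even_defects x M : 0 < x -> (1 <= M)%nat ->
  let e n := harmonic_defect n - euler_gamma in
  partial_sum x (2 * M)
  = / 2 * (INR (2 * M) * e (2 * M)%nat) + / 2 * e (2 * M)%nat - e M + x / 2 * e M
    - stirling_defect M
    - 2 * (ln_barnes_partial ((x + 1) / 2 - 1) M - ln_barnes_partial (x / 2 - 1) M)
    + ln_gamma_seq (x / 2) M + ln (1 + x / 2 / INR M)
    + ln 2 / 2 - euler_gamma / 2 + x / 2 * euler_gamma.
Proof.
  intros Hx HM e. rewrite partial_sum_even by exact Hx.
  apply le_INR in HM. simpl in HM.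
  unfold e, harmonic_defect, stirling_defect, ln_gamma_seq.
  change (ln_rising (x / 2) (S M)) with (ln_rising (x / 2) M + ln (x / 2 + INR M)).
  rewrite INR_double, ln_mult, (Rplus_comm (x / 2)), (ln_plus_factor (INR M) (x / 2)) by lra.
  field.
Qed.

Lemma is_lim_seq_partial_sum_even x (LB1 LB0 LG : R) : 0 < x ->
  is_lim_seq (ln_barnes_partial ((x + 1) / 2 - 1)) LB1 ->
  is_lim_seq (ln_barnes_partial (x / 2 - 1)) LB0 ->
  is_lim_seq (ln_gamma_seq (x / 2)) LG ->
  is_lim_seq (fun M => partial_sum x (2 * M))
    (/ 2 * (1/2) - ln (2 * PI) / 2 - 2 * (LB1 - LB0) + LG
     + ln 2 / 2 - euler_gamma / 2 + x / 2 * euler_gamma).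
Proof.
  intros Hx H1 H0 HG.
  set (e := fun n => harmonic_defect n - euler_gamma).
  assert (He : is_lim_seq e 0).
  { replace (Finite 0) with (Finite (euler_gamma - euler_gamma)) by (f_equal; ring).
    apply is_lim_seq_minus'; [exact is_lim_seq_harmonic_defect|apply is_lim_seq_const]. }
  assert (Hne : is_lim_seq (fun M => INR (2 * M) * e (2 * M)%nat) (1/2))
    by exact (is_lim_seq_double _ _ is_lim_seq_scaled_harmonic_defect).
  assert (Hln : is_lim_seq (fun M => ln (1 + x / 2 / INR M)) 0).
  { rewrite <- ln_1. apply is_lim_seq_ln; [lra|].
    replace (Finite 1) with (Finite (1 + 0)) by (f_equal; ring).
    apply is_lim_seq_plus'; [apply is_lim_seq_const|apply is_lim_seq_div_INR]. }
  apply (is_lim_seq_ext_loc (fun M =>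
    / 2 * (INR (2 * M) * e (2 * M)%nat) + / 2 * e (2 * M)%nat - e M + x / 2 * e M
    - stirling_defect M
    - 2 * (ln_barnes_partial ((x + 1) / 2 - 1) M - ln_barnes_partial (x / 2 - 1) M)
    + ln_gamma_seq (x / 2) M + ln (1 + x / 2 / INR M)
    + ln 2 / 2 - euler_gamma / 2 + x / 2 * euler_gamma)).
  { exists 1%nat. intros M HM. symmetry. exact (partial_sum_even_defects x M Hx HM). }
  replace (/ 2 * (1/2) - ln (2 * PI) / 2 - 2 * (LB1 - LB0) + LG
     + ln 2 / 2 - euler_gamma / 2 + x / 2 * euler_gamma)
    with (/ 2 * (1/2) + / 2 * 0 - 0 + x / 2 * 0 - ln (2 * PI) / 2 - 2 * (LB1 - LB0) + LG + 0
     + ln 2 / 2 - euler_gamma / 2 + x / 2 * euler_gamma) by ring.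
  repeat (apply is_lim_seq_minus' || apply is_lim_seq_plus' || apply is_lim_seq_scal_finite
    || apply is_lim_seq_const); auto using is_lim_seq_double, is_lim_seq_stirling_defect.
Qed.

Lemma is_lim_seq_series_term x : 0 < x -> is_lim_seq (series_term x) 0.
Proof.
  intros Hx. assert (He := proj1 (is_lim_seq_incr_1 _ _) is_lim_seq_scaled_harmonic_defect).
  assert (Hl := is_lim_seq_mul_ln_1p (x - 1)).
  apply is_lim_seq_abs_0.
  apply (is_lim_seq_ext (fun k => Rabs (INR (S k) * (harmonic_defect (S k) - euler_gamma)
    - INR (S k) * ln (1 + (x - 1) / INR (S k)) + x - 3/2))).
  { intros k. unfold series_term. rewrite !Rabs_mult, pow_1_abs, Rmult_1_l, <- Rabs_mult.
    assert (HN : 1 <= INR (S k)) by (rewrite S_INR; generalize (pos_INR k); lra).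
    set (N := INR (S k)) in *. f_equal. unfold harmonic_defect. fold N.
    replace (N + x - 1) with (N + (x - 1)) by ring.
    rewrite (ln_plus_factor N (x - 1)) by lra. field. lra. }
  replace 0 with (Rabs (1/2 - (x - 1) + x - 3/2)) by (rewrite <- Rabs_R0; f_equal; field).
  apply (is_lim_seq_abs _ (Finite (1/2 - (x - 1) + x - 3/2))).
  repeat (apply is_lim_seq_minus' || apply is_lim_seq_plus' || apply is_lim_seq_const); assumption.
Qed.

Theorem mainTheorem14 (x : R) (hx : 0 < x) :
  is_series
    (fun k : nat =>
       let n := INR (S k) in
       (-1) ^ (S k) * n *
       (harmonic (S k) - ln (n + x - 1) - euler_gamma + x / n - 3 / (2 * n)))
    (euler_gamma / 4 - (x - ln 2 - 1) / 2
     - 2 * ln (BarnesG ((x + 1) / 2) / BarnesG (x / 2))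
     + ln (Gamma (x / 2))).
Proof.
  destruct (ex_finite_lim_ln_barnes_partial ((x + 1) / 2 - 1)) as [LB1 HB1].
  destruct (ex_finite_lim_ln_barnes_partial (x / 2 - 1)) as [LB0 HB0].
  destruct (ex_finite_lim_ln_gamma_seq (x / 2) ltac:(lra)) as [LG HG].
  destruct (ln_BarnesG_lim ((x + 1) / 2) LB1 ltac:(lra) HB1) as [P1 E1].
  destruct (ln_BarnesG_lim (x / 2) LB0 ltac:(lra) HB0) as [P0 E0].
  replace (euler_gamma / 4 - (x - ln 2 - 1) / 2
     - 2 * ln (BarnesG ((x + 1) / 2) / BarnesG (x / 2)) + ln (Gamma (x / 2)))
    with (/ 2 * (1/2) - ln (2 * PI) / 2 - 2 * (LB1 - LB0) + LG
     + ln 2 / 2 - euler_gamma / 2 + x / 2 * euler_gamma)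
    by (rewrite ln_div, E1, E0, (ln_Gamma_lim (x / 2) LG) by (auto; lra); field).
  change (is_lim_seq (sum_n (series_term x)) (/ 2 * (1/2) - ln (2 * PI) / 2 - 2 * (LB1 - LB0) + LG
     + ln 2 / 2 - euler_gamma / 2 + x / 2 * euler_gamma)).
  apply (is_lim_seq_ext (fun N => partial_sum x (S N))); [intros; symmetry; apply sum_n_series_term|].
  apply (is_lim_seq_incr_1 (partial_sum x)), is_lim_seq_even_step.
  - apply is_lim_seq_partial_sum_even; assumption.
  - apply (is_lim_seq_ext (series_term x)); [intros; simpl; ring|].
    apply is_lim_seq_series_term, hx.
Qed.
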